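(* Let $S_X,S_Y$ be finite nonempty action sets, $\varphi:S_X\times S_Y\to\mathbb{R}$, $\lambda\in[0,1)$, and let $(\sigma_X^0,\sigma_X^* )$ be a reactive learning strategy for $X$ with reachable set $\mathcal{M}_X$. Suppose there exists $\psi:S_X\to\mathbb{R}$ such that, with $\Psi(\tau_X)=\mathbb{E}_{s_X\sim\tau_X}[\psi(s_X)]$, the generalized next-round correction condition $$\varphi(\tau_X,s_Y)=\Psi(\tau_X)-\lambda\Psi(\sigma_X^*[\tau_X,s_Y])-(1-\lambda)\Psi(\sigma_X^0)$$ holds for every $\tau_X\in\mathcal{M}_X$ and $s_Y\in S_Y$. Then $(\sigma_X^0,\sigma_X^* )$ is a $(\varphi,\lambda)$-autocratic strategy.
   Context: Two players $X,Y$ play a repeated game with finite action sets $S_X,S_Y$; $\Delta(S)$ denotes the probability distributions on $S$. $\varphi(\tau_X,s_Y)=\mathbb{E}_{s_X\sim\tau_X}[\varphi(s_X,s_Y)]$. Histories: $\mathcal{H}=\bigcup_{T\ge0}(S_X\times S_Y)^T$; behavioral strategies are maps $\sigma:\mathcal{H}\to\Delta(S)$; players independently draw actions each round from their strategies evaluated at the history of realized action pairs, with $\mathbb{E}_{\sigma_X,\sigma_Y}$ the expectation over the resulting play. A strategy $\sigma_X$ is $(\varphi,\lambda)$-autocratic if for every behavioral strategy $\sigma_Y$ of $Y$, $\mathbb{E}_{\sigma_X,\sigma_Y}\big[(1-\lambda)\sum_{t\ge0}\lambda^t\varphi(s_X^t,s_Y^t)\big]=0$. A reactive learning strategy $(\sigma_X^0,\sigma_X^*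 )$, $\sigma_X^0\in\Delta(S_X)$, $\sigma_X^*:\Delta(S_X)\times S_Y\to\Delta(S_X)$, plays $\tau_X^0=\sigma_X^0$ in round $0$ and $\tau_X^{t+1}=\sigma_X^*[\tau_X^t,s_Y^t]$ in round $t+1$, where $s_Y^t$ is $Y$'s realized action in round $t$. Its reachable set $\mathcal{M}_X$ is the smallest subset of $\Delta(S_X)$ containing $\sigma_X^0$ and closed under $\tau_X\mapsto\sigma_X^*[\tau_X,s_Y]$ for every $s_Y\in S_Y$. *)

From HB Require Import structures.
From mathcomp Require Import all_boot all_order all_algebra.
From mathcomp Require Import all_classical all_reals.
From mathcomp Require Import topology normedtype sequences.
Set Implicit Arguments. Unset Strict Implicit. Unset Printing Implicit Defensive.
Import Order.TTheory GRing.Theory Num.Theory.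
Import numFieldNormedType.Exports.
Local Open Scope classical_set_scope.
Local Open Scope ring_scope.

Section RepeatedGame.
Variable R : realType.

Record dist (S : finType) := Dist {
  pmf :> {ffun S -> R};
  _ : [forall s, 0 <= pmf s] && (\sum_(s : S) pmf s == 1) }.

Variables SX SY : finType.

Definition history := seq (SX * SY).

Definition behav_Y := history -> dist SY.

Definition mix_payoff (phi : SX -> SY -> R) (tau : dist SX) (sY : SY) : R :=
  \sum_(sX : SX) tau sX * phi sX sY.

Definition mix_val (psi : SX -> R) (tau : dist SX) : R :=
  \sum_(sX : SX) tau sX * psi sX.

Section Reactive.
Variable sigma0 : dist SX.
Variable sigmastar : dist SX -> SY -> dist SX.

Inductive reachable : dist SX -> Prop :=
  | reach0 : reachable sigma0
  | reachS tau sY : reachable tau -> reachable (sigmastar tau sY).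

(** Mixed action of X after a history h: tau^0 = sigma0,
    tau^{t+1} = sigmastar tau^t s_Y^t (the reactive learning strategy
    viewed as a behavioral strategy). *)
Definition tauX (h : history) : dist SX :=
  foldl (fun tau p => sigmastar tau p.2) sigma0 h.

(** Probability that the play starts with (pre ++ rest), given that
    it started with pre: product of independent draws each round. *)
Fixpoint hist_prob (sY : behav_Y) (pre rest : history) : R :=
  match rest with
  | [::] => 1
  | p :: r => tauX pre p.1 * sY pre p.2 * hist_prob sY (rcons pre p) r
  end.

Definition exp_stage (phi : SX -> SY -> R) (sY : behav_Y) (t : nat) : R :=
  \sum_(h : t.-tuple (SX * SY)) \sum_(p : SX * SY)
     hist_prob sY [::] (rcons (tval h) p) * phi p.1 p.2.

(** (phi, lambda)-autocratic: for every behavioral strategy of Y,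
    E[(1-lambda) sum_t lambda^t phi(s_X^t, s_Y^t)] = 0, the expectation
    of the discounted sum being the (convergent) series of the
    discounted expected stage payoffs. *)
Definition autocratic (phi : SX -> SY -> R) (lambda : R) : Prop :=
  forall sY : behav_Y,
    series (fun t => (1 - lambda) * lambda ^+ t * exp_stage phi sY t)
      @ \oo --> (0 : R).

End Reactive.
End RepeatedGame.

(* Let a_n be the expectation of Psi(tau^n), where tau^n is the mixed action of X
   after n rounds; tau^n is always reachable.  Given the history, s_X^n and s_Y^n
   are drawn independently, so averaging the correction condition over the play
   gives E[phi(s_X^n, s_Y^n)] = a_n - lambda a_(n+1) - (1 - lambda) a_0.  The
   discounted partial sums then telescope to (1 - lambda) lambda^n (a_0 - a_n),
   which tends to 0 since |a_n| <= sum_s |psi s|. *)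

From HB Require Import structures.
From mathcomp Require Import all_boot all_order all_algebra.
From mathcomp Require Import all_classical all_reals.
From mathcomp Require Import topology normedtype sequences.
From mathcomp Require Import ring.

Set Implicit Arguments.
Unset Strict Implicit.
Unset Printing Implicit Defensive.
Import Order.TTheory GRing.Theory Num.Theory.
Import numFieldNormedType.Exports.
Local Open Scope classical_set_scope.
Local Open Scope ring_scope.

Lemma discounted_telescoping_series (R : comPzRingType) (a : nat -> R) (lambda : R) n :
  series (fun t => (1 - lambda) * lambda ^+ t *
                   (a t - lambda * a t.+1 - (1 - lambda) * a 0%N)) n
  = (1 - lambda) * lambda ^+ n * (a 0%N - a n).
Proof.
elim: n => [|n IH]; first by rewrite /series /= big_geq // subrr mulr0.
by rewrite seriesSr IH exprS; ring.
Qed.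

Lemma discounted_telescoping_cvg0 (R : realType) (u a : nat -> R) (lambda M : R) :
  0 <= lambda -> lambda < 1 -> (forall n, `|a n| <= M) ->
  (forall t, u t = a t - lambda * a t.+1 - (1 - lambda) * a 0%N) ->
  series (fun t => (1 - lambda) * lambda ^+ t * u t) @ \oo --> (0 : R).
Proof.
move=> l_ge0 l_lt1 aM uE; under [X in series X]funext => t do rewrite uE.
rewrite (funext (discounted_telescoping_series a lambda)).
pose K := (1 - lambda) * (M + M).
have l_norm : `|lambda| < 1 by rewrite ger0_norm.
apply: (@squeeze_cvgr _ _ _ _ (geometric (- K) lambda) (geometric K lambda));
  [| exact: cvg_geometric | exact: cvg_geometric].
near=> n; rewrite /geometric /= mulNr -ler_norml.
have l1_ge0 : 0 <= 1 - lambda by rewrite subr_ge0 ltW.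
rewrite !normrM normrX (ger0_norm l1_ge0) (ger0_norm l_ge0) /K mulrAC.
apply: ler_wpM2r; first exact: exprn_ge0.
apply: ler_wpM2l => //.
by apply: le_trans (ler_normB _ _) _; rewrite lerD.
Unshelve. all: by end_near.
Qed.

Lemma norm_convex_le (R : realDomainType) (I : finType) (w F : I -> R) (M : R) :
  (forall i, 0 <= w i) -> \sum_i w i = 1 -> (forall i, `|F i| <= M) ->
  `|\sum_i w i * F i| <= M.
Proof.
move=> w_ge0 w_sum FM; apply: le_trans (ler_norm_sum _ _ _) _.
rewrite -[M]mul1r -w_sum mulr_suml; apply: ler_sum => i _.
by rewrite normrM ger0_norm // ler_wpM2l.
Qed.

Lemma dist_ge0 (R : realType) (S : finType) (d : dist R S) s : 0 <= d s.
Proof. by case: d => f /= /andP[/forallP]. Qed.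

Lemma dist_sum1 (R : realType) (S : finType) (d : dist R S) : \sum_s d s = 1.
Proof. by case: d => f /= /andP[_ /eqP]. Qed.

Lemma sum_prod_dist (R : realType) (SX SY : finType)
    (dX : dist R SX) (dY : dist R SY) (G : SX -> SY -> R) :
  \sum_(p : SX * SY) dX p.1 * dY p.2 * G p.1 p.2 =
  \sum_y dY y * \sum_x dX x * G x y.
Proof.
rewrite -(pair_bigA _ (fun x y => dX x * dY y * G x y)) exchange_big /=.
by apply: eq_bigr => y _; rewrite mulr_sumr; apply: eq_bigr => x _; ring.
Qed.

Lemma sum_dist_mulr (R : realType) (S : finType) (d : dist R S) (c : R) :
  \sum_s d s * c = c.
Proof. by rewrite -mulr_suml dist_sum1 mul1r. Qed.

Lemma sum_dist_affine (R : realType) (S : finType) (d : dist R S) (B : S -> R) (A a c : R) :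
  \sum_s d s * (A - a * B s - c) = A - a * \sum_s d s * B s - c.
Proof.
rewrite (eq_bigr (fun s => d s * A - a * (d s * B s) - d s * c)); last by move=> s _; ring.
by rewrite !sumrB !sum_dist_mulr -mulr_sumr.
Qed.

Lemma mix_val_norm_le (R : realType) (SX : finType) (psi : SX -> R) (d : dist R SX) :
  `|mix_val psi d| <= \sum_s `|psi s|.
Proof.
apply: norm_convex_le; [exact: dist_ge0 | exact: dist_sum1 |] => s.
by rewrite (bigD1 s) //= lerDl sumr_ge0.
Qed.

Lemma big_tuple0 (R : nmodType) (T : finType) (F : seq T -> R) :
  \sum_(h : 0.-tuple T) F h = F [::].
Proof. by rewrite (big_pred1 [tuple]) // => h; apply/esym/eqP/tuple0. Qed.

Lemma big_tuple_rcons (R : nmodType) (T : finType) n (F : seq T -> R) :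
  \sum_(h : n.+1.-tuple T) F h = \sum_(h : n.-tuple T) \sum_(x : T) F (rcons h x).
Proof.
pose f (q : n.-tuple T * T) : n.+1.-tuple T := [tuple of rcons q.1 q.2].
have f_inj : injective f.
  by move=> [h x] [h' x'] /(congr1 val)/rcons_inj[/val_inj-> ->].
have f_bij : bijective f.
  by apply: inj_card_bij f_inj _; rewrite card_prod !card_tuple expnSr.
by rewrite pair_big (reindex f) //; exact: onW_bij.
Qed.

Section Play.
Variables (R : realType) (SX SY : finType).
Variables (sigma0 : dist R SX) (sigmastar : dist R SX -> SY -> dist R SX).
Variable sY : behav_Y R SX SY.

Local Notation tau := (tauX sigma0 sigmastar).
Local Notation prob := (hist_prob sigma0 sigmastar sY).

Lemma tauX_rcons h p : tau (rcons h p) = sigmastar (tau h) p.2.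
Proof. by rewrite /tauX -cats1 foldl_cat. Qed.

Lemma reachable_tauX h : reachable sigma0 sigmastar (tau h).
Proof.
elim/last_ind: h => [|h p IH]; first exact: reach0.
by rewrite tauX_rcons; apply: reachS.
Qed.

Lemma hist_prob_rcons pre r p :
  prob pre (rcons r p) = prob pre r * (tau (pre ++ r) p.1 * sY (pre ++ r) p.2).
Proof.
elim: r pre => [|q r IH] pre /=; first by rewrite cats0 mulr1 mul1r.
by rewrite IH cat_rcons mulrA.
Qed.

Lemma hist_prob_ge0 pre r : 0 <= prob pre r.
Proof. by elim: r pre => [|q r IH] pre /=; rewrite ?ler01 ?mulr_ge0 ?dist_ge0. Qed.

Definition expect n (F : history SX SY -> R) : R :=
  \sum_(h : n.-tuple (SX * SY)) prob [::] h * F h.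

Lemma expect0 F : expect 0 F = F [::].
Proof. by rewrite /expect (big_tuple0 (fun h => prob [::] h * F h)) mul1r. Qed.

Lemma expectS n F :
  expect n.+1 F =
  expect n (fun h => \sum_(p : SX * SY) tau h p.1 * sY h p.2 * F (rcons h p)).
Proof.
rewrite /expect (big_tuple_rcons n (fun h => prob [::] h * F h)); apply: eq_bigr => h _.
by rewrite mulr_sumr; apply: eq_bigr => p _; rewrite hist_prob_rcons; ring.
Qed.

Lemma expect_cst n c : expect n (fun=> c) = c.
Proof.
elim: n => [|n IH]; first exact: expect0.
rewrite expectS -[RHS]IH; congr expect; apply: funext => h.
rewrite (sum_prod_dist _ _ (fun _ _ => c)).
by under eq_bigr do rewrite sum_dist_mulr; exact: sum_dist_mulr.
Qed.

Lemma expect_affine n F G a c :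
  expect n (fun h => F h - a * G h - c) = expect n F - a * expect n G - c.
Proof.
rewrite -[c in RHS](expect_cst n) /expect mulr_sumr -!sumrB.
by apply: eq_bigr => h _; ring.
Qed.

Lemma expect_norm_le n F M : (forall h, `|F h| <= M) -> `|expect n F| <= M.
Proof.
move=> FM; apply: norm_convex_le => // [h|]; first exact: hist_prob_ge0.
by rewrite -[RHS](expect_cst n 1); apply: eq_bigr => h _; rewrite mulr1.
Qed.

Lemma exp_stage_expect phi t :
  exp_stage sigma0 sigmastar phi sY t =
  expect t (fun h => \sum_y sY h y * mix_payoff phi (tau h) y).
Proof.
rewrite /exp_stage /expect; apply: eq_bigr => h _.
rewrite -sum_prod_dist mulr_sumr; apply: eq_bigr => p _.
by rewrite hist_prob_rcons; ring.
Qed.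

Definition exp_mix_val psi n := expect n (fun h => mix_val psi (tau h)).

Lemma exp_mix_valS psi n :
  exp_mix_val psi n.+1 =
  expect n (fun h => \sum_y sY h y * mix_val psi (sigmastar (tau h) y)).
Proof.
rewrite /exp_mix_val expectS; congr expect; apply: funext => h.
under eq_bigr do rewrite tauX_rcons.
rewrite (sum_prod_dist _ _ (fun _ y => _ (sigmastar _ y))).
by apply: eq_bigr => y _; rewrite sum_dist_mulr.
Qed.

Variables (phi : SX -> SY -> R) (psi : SX -> R) (lambda : R).
Hypothesis correction : forall d, reachable sigma0 sigmastar d ->
  forall y, mix_payoff phi d y =
    mix_val psi d - lambda * mix_val psi (sigmastar d y)
    - (1 - lambda) * mix_val psi sigma0.

Lemma exp_stage_telescoping t :
  exp_stage sigma0 sigmastar phi sY t =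
  exp_mix_val psi t - lambda * exp_mix_val psi t.+1 - (1 - lambda) * exp_mix_val psi 0.
Proof.
rewrite exp_mix_valS /exp_mix_val expect0 -expect_affine exp_stage_expect.
congr expect; apply: funext => h.
by under eq_bigr do rewrite (correction (reachable_tauX h)); rewrite sum_dist_affine.
Qed.

End Play.

Theorem proposition1 (R : realType) (SX SY : finType)
  (hSX : (0 < #|SX|)%N) (hSY : (0 < #|SY|)%N)
  (phi : SX -> SY -> R) (lambda : R)
  (hl0 : 0 <= lambda) (hl1 : lambda < 1)
  (sigma0 : dist R SX) (sigmastar : dist R SX -> SY -> dist R SX)
  (psi : SX -> R)
  (hcorr : forall tau, reachable sigma0 sigmastar tau -> forall sY : SY,
      mix_payoff phi tau sY =
        mix_val psi tau - lambda * mix_val psi (sigmastar tau sY)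
        - (1 - lambda) * mix_val psi sigma0) :
  autocratic sigma0 sigmastar phi lambda.
Proof.
move=> sY.
apply: (discounted_telescoping_cvg0 hl0 hl1 _ (exp_stage_telescoping sY hcorr)) => n.
by apply: expect_norm_le => h; apply: mix_val_norm_le.
Qed.
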